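(* Let $\mathbf{A}\in\mathbb{R}^{n\times d}$ have full column rank, $k\in[d]$ with $2k\le d$, and $\alpha\ge1$. Define $T:=\lceil\sqrt{\log(d/(2k))/\alpha}\rceil$ and $k_t:=\max\{\lceil d\exp(-\alpha t^2)\rceil,2k\}$ for all $t\in\{0,1,\dots,T\}$. Then for all $p\in[1,100]$, $\eta\in(0,1)$, and $t\in[T]$, $$k_{t-1}^p\sqrt{\frac{\overline{\Sigma}_{k_t}(\mathbf{A})}{\sigma_d(\mathbf{A})^2}}\exp(\alpha t)=O\Big(d^p\,\bar\kappa_{k,p^{-1}+\eta}(\mathbf{A})\exp\Big(\alpha\Big(p(c_p^2-1)+\frac{c_p^2}{\eta}\Big)\Big)\Big),\quad\text{where } c_p:=1+\frac{1}{2p},$$ and the constant in $O(\cdot)$ is absolute (independent of $\mathbf{A},d,k,\alpha,p,\eta,t$).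
   Context: $n\ge d$; $\sigma_1(\mathbf{A})\ge\cdots\ge\sigma_d(\mathbf{A})>0$ are the singular values of $\mathbf{A}$; $\overline{\Sigma}_k(\mathbf{A}):=\frac1k\sum_{i>k}\sigma_i(\mathbf{A})^2$; for $q\in(0,\infty)$, $\bar\kappa_{k,q}(\mathbf{A}):=\big(\frac{1}{d-k}\sum_{i>k}\sigma_i(\mathbf{A})^q/\sigma_d(\mathbf{A})^q\big)^{1/q}$; $\log$ is the natural logarithm. *)

From HB Require Import structures.
From mathcomp Require Import all_boot all_order all_algebra.
From mathcomp Require Import all_classical all_reals all_analysis.
Set Implicit Arguments. Unset Strict Implicit. Unset Printing Implicit Defensive.
Import Order.TTheory GRing.Theory Num.Theory.
Local Open Scope ring_scope.

Section Defs.
Variable R : realType.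

Definition orthogonal_mx m (Q : 'M[R]_m) : Prop := Q *m Q^T = 1%:M.

(* s : nat -> R lists singular values with 1-based indexing:
   s 1 >= s 2 >= ... >= s d >= 0 and A = U * diag(s 1, ..., s d) * V^T
   for orthogonal U (n x n) and V (d x d) (a full SVD of A, n >= d).
   The values s i for i = 0 or i > d are irrelevant. *)
Definition is_singular_values n d (A : 'M[R]_(n, d)) (s : nat -> R) : Prop :=
  (forall i j : nat, (1 <= i)%N -> (i <= j)%N -> (j <= d)%N -> s j <= s i) /\
  (forall i : nat, (1 <= i)%N -> (i <= d)%N -> 0 <= s i) /\
  exists (U : 'M[R]_n) (V : 'M[R]_d),
    orthogonal_mx U /\ orthogonal_mx V /\
    A = U *m (\matrix_(i < n, j < d) (if (i : nat) == (j : nat) then s j.+1 else 0))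
          *m V^T.

Definition SigmaBar (d : nat) (s : nat -> R) (k : nat) : R :=
  k%:R^-1 * \sum_(k.+1 <= i < d.+1) s i ^+ 2.

Definition kappaBar (d : nat) (s : nat -> R) (k : nat) (q : R) : R :=
  ((d - k)%:R^-1 * \sum_(k.+1 <= i < d.+1) (s i / s d) `^ q) `^ q^-1.

Definition Tpar (d k : nat) (alpha : R) : nat :=
  `|Num.ceil (Num.sqrt (ln (d%:R / (2 * k)%:R) / alpha))|%N.

Definition kpar (d k : nat) (alpha : R) (t : nat) : nat :=
  maxn `|Num.ceil (d%:R * expR (- (alpha * (t%:R) ^+ 2)))|%N (2 * k).

End Defs.

From HB Require Import structures.
From mathcomp Require Import all_boot all_order all_algebra.
From mathcomp Require Import ring lra zify.
From mathcomp Require Import all_classical all_reals all_analysis.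
Set Implicit Arguments. Unset Strict Implicit. Unset Printing Implicit Defensive.
Import Order.TTheory GRing.Theory Num.Theory.
Local Open Scope ring_scope.

(* Put r_i := sigma_i / sigma_d, q := 1/p + eta < 2 and Q := sum_{i>k} r_i^q.
   For K >= 2k and x := r_{K+1}, at least K/2 terms of Q are >= x^q, so
   x^q <= 2Q/K, while every tail term obeys r_i^2 <= x^(2-q) r_i^q; hence
   SigmaBar_K / sigma_d^2 <= (2Q/K)^(2/q), i.e.
   sqrt(SigmaBar_K) / sigma_d <= (2d/K)^(1/q) kappaBar_{k,q}.
   The schedule gives k_t >= d exp(-alpha t^2) and, for t <= T,
   k_(t-1) <= 2 d exp(-alpha (t-1)^2), so the left-hand side is at most
   2^(p+1/q) d^p kappaBar exp(alpha (-p (t-1)^2 + t^2/q + t)); the maximum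
   over t of this concave quadratic exponent is the exponent of the claim. *)

Lemma abs_ceil_itv (R : realType) (x : R) :
  0 <= x -> x <= `|Num.ceil x|%:R < x + 1.
Proof.
move=> x_ge0; have ceil_ge0 : 0 <= Num.ceil x.
  by rewrite ceil_ge0 (lt_le_trans _ x_ge0) // ltrN10.
rewrite natr_absz ger0_norm //.
have /andP[lt_ceil le_ceil] := ceil_itv x; rewrite intrB in lt_ceil.
by apply/andP; split => //; lra.
Qed.

Section PowerTail.
Variables (R : realType) (d : nat) (r : nat -> R).
Hypothesis r_ge0 : forall i, (1 <= i <= d)%N -> 0 <= r i.
Hypothesis r_nonincr :
  forall i j, (1 <= i)%N -> (i <= j)%N -> (j <= d)%N -> r j <= r i.

Lemma sum_sqr_tail_le (K : nat) (q : R) : q <= 2 ->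
  \sum_(K.+1 <= i < d.+1) r i ^+ 2
    <= r K.+1 `^ (2 - q) * \sum_(K.+1 <= i < d.+1) r i `^ q.
Proof.
move=> q_le2; rewrite mulr_sumr; apply: ler_sum_nat => i /andP[Ki id].
have ri_ge0 : 0 <= r i by apply: r_ge0; lia.
have rK_ge0 : 0 <= r K.+1 by apply: r_ge0; lia.
rewrite -powR_mulrn // -{1}(subrK q 2%:R) powRD; last by rewrite subrK pnatr_eq0.
apply: ler_wpM2r; first exact: powR_ge0.
apply: ge0_ler_powR; rewrite ?nnegrE ?subr_ge0 //.
apply: r_nonincr; lia.
Qed.

Lemma powR_head_le (k K : nat) (q : R) : 0 <= q -> (k <= K < d)%N ->
  (K.+1 - k)%:R * r K.+1 `^ q <= \sum_(k.+1 <= i < d.+1) r i `^ q.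
Proof.
move=> q_ge0 /andP[kK Kd].
rewrite (big_cat_nat _ (n := K.+2)) //=; try lia.
apply: ler_wpDr; first by apply: sumr_ge0 => i _; exact: powR_ge0.
rewrite (_ : (K.+1 - k = K.+2 - k.+1)%N); last by lia.
rewrite mulr_natl -sumr_const_nat; apply: ler_sum_nat => i /andP[ki iK].
apply: ge0_ler_powR; rewrite ?nnegrE ?r_ge0 //; try lia.
apply: r_nonincr; lia.
Qed.

Lemma mean_sqr_tail_le (k K : nat) (q : R) :
  (0 < K)%N -> (2 * k <= K)%N -> 0 < q -> q < 2 ->
  K%:R^-1 * \sum_(K.+1 <= i < d.+1) r i ^+ 2
    <= (2 / K%:R * \sum_(k.+1 <= i < d.+1) r i `^ q) `^ (2 / q).
Proof.
move=> K_gt0 kK q_gt0 q_lt2.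
have [dK|Kd] := leqP d K.
  by rewrite big_geq ?ltnS // mulr0; exact: powR_ge0.
set Q := \sum_(k.+1 <= i < d.+1) _; set x := r K.+1; set y := 2 / K%:R * Q.
have x_ge0 : 0 <= x by apply: r_ge0; lia.
have K_gt0R : (0 : R) < K%:R by rewrite ltr0n.
have Q_ge0 : 0 <= Q by apply: sumr_ge0 => i _; exact: powR_ge0.
have y_ge0 : 0 <= y by rewrite mulr_ge0 // divr_ge0 // ltW.
have tail_le : \sum_(K.+1 <= i < d.+1) r i `^ q <= Q.
  rewrite /Q [X in _ <= X](big_cat_nat _ (n := K.+1)) //=; try lia.
  by rewrite lerDr; apply: sumr_ge0 => i _; exact: powR_ge0.
have xq_le : x `^ q <= y.
  have : (K.+1 - k)%:R * x `^ q <= Q by apply: powR_head_le; [exact: ltW | lia].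
  have : (K%:R : R) <= 2 * (K.+1 - k)%:R by rewrite -natrM ler_nat; lia.
  rewrite /y mulrAC ler_pdivlMr //; have := powR_ge0 x q; nra.
have x2q_le : x `^ (2 - q) <= y `^ (2 / q - 1).
  rewrite (_ : 2 - q = q * (2 / q - 1)); last by field; rewrite gt_eqF.
  rewrite powRrM; apply: ge0_ler_powR; rewrite ?nnegrE ?powR_ge0 //.
  by rewrite subr_ge0 ler_pdivlMr //; lra.
apply: le_trans (_ : K%:R^-1 * (y `^ (2 / q - 1) * Q) <= _).
  apply: ler_wpM2l; first by rewrite invr_ge0 ltW.
  apply: le_trans (sum_sqr_tail_le K (ltW q_lt2)) _.
  exact: ler_pM (powR_ge0 _ _) (sumr_ge0 _ (fun i _ => powR_ge0 _ _)) x2q_le tail_le.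
rewrite -(mulr_powRB1 y_ge0 (divr_gt0 _ q_gt0)) //.
have -> : K%:R^-1 * (y `^ (2 / q - 1) * Q) = y / 2 * y `^ (2 / q - 1).
  by rewrite /y; field; rewrite gt_eqF.
by apply: ler_wpM2r; [exact: powR_ge0 | lra].
Qed.

End PowerTail.

Lemma sqrt_SigmaBar_le (R : realType) (d : nat) (s : nat -> R) (k K : nat) (q : R) :
  (forall i j, (1 <= i)%N -> (i <= j)%N -> (j <= d)%N -> s j <= s i) ->
  0 < s d -> (1 <= k)%N -> (2 * k <= K)%N -> (2 * k <= d)%N -> 0 < q -> q < 2 ->
  Num.sqrt (SigmaBar d s K / s d ^+ 2)
    <= (2 * d%:R / K%:R) `^ q^-1 * kappaBar d s k q.
Proof.
move=> s_nonincr sd_gt0 k_ge1 kK kd q_gt0 q_lt2.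
pose r i := s i / s d.
have r_nonincr i j : (1 <= i)%N -> (i <= j)%N -> (j <= d)%N -> r j <= r i.
  by move=> *; rewrite ler_pM2r ?invr_gt0 //; apply: s_nonincr.
have r_ge0 i : (1 <= i <= d)%N -> 0 <= r i.
  case/andP=> i_ge1 id; rewrite divr_ge0 ?ltW //.
  exact: lt_le_trans sd_gt0 (s_nonincr i d i_ge1 id (leqnn d)).
have K_gt0 : (0 < K)%N by lia.
have K_gt0R : (0 : R) < K%:R by rewrite ltr0n.
have dk_gt0 : (0 : R) < (d - k)%:R by rewrite ltr0n; lia.
set Q := \sum_(k.+1 <= i < d.+1) r i `^ q.
have Q_ge0 : 0 <= Q by apply: sumr_ge0 => i _; exact: powR_ge0.
set y := 2 / K%:R * Q.
have y_ge0 : 0 <= y by rewrite mulr_ge0 // divr_ge0 // ltW.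
have SigmaBar_le : SigmaBar d s K / s d ^+ 2 <= y `^ (2 / q).
  rewrite /SigmaBar -mulrA mulr_suml.
  under eq_bigr do rewrite -expr_div_n.
  exact: mean_sqr_tail_le.
have sqrt_y : Num.sqrt (y `^ (2 / q)) = y `^ q^-1.
  rewrite (_ : 2 / q = q^-1 * 2%:R); last exact: mulrC.
  by rewrite powRrM powR_mulrn ?powR_ge0 // sqrtr_sqr ger0_norm ?powR_ge0.
apply: le_trans (_ : y `^ q^-1 <= _); first by rewrite -sqrt_y ler_sqrt ?powR_ge0.
have dK_ge0 : 0 <= 2 * d%:R / K%:R :> R by rewrite divr_ge0 // ltW.
have meanQ_ge0 : 0 <= (d - k)%:R^-1 * Q by rewrite mulr_ge0 // invr_ge0 ltW.
rewrite /kappaBar -/r -/Q -powRM //.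
apply: ge0_ler_powR; rewrite ?nnegrE ?invr_ge0 ?mulr_ge0 //; first exact: ltW.
have -> : 2 * d%:R / K%:R * ((d - k)%:R^-1 * Q) = y * (d%:R / (d - k)%:R).
  by rewrite /y; ring.
by rewrite ler_peMr // ler_pdivlMr // mul1r ler_nat leq_subr.
Qed.

Section Schedule.
Variables (R : realType) (d k : nat) (alpha : R).

Lemma kpar_ge_exp t : d%:R * expR (- (alpha * t%:R ^+ 2)) <= (kpar d k alpha t)%:R.
Proof.
have x_ge0 : 0 <= d%:R * expR (- (alpha * t%:R ^+ 2)) by rewrite mulr_ge0 ?expR_ge0.
case/andP: (abs_ceil_itv x_ge0) => le_ceil _.
by apply: le_trans le_ceil _; rewrite ler_nat leq_maxl.
Qed.

Lemma kpar_le_exp t : (1 <= k)%N ->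
  (2 * k)%:R < d%:R * expR (- (alpha * t%:R ^+ 2)) ->
  (kpar d k alpha t)%:R <= 2 * (d%:R * expR (- (alpha * t%:R ^+ 2))).
Proof.
set x := d%:R * _ => k_ge1 kx.
have x_ge0 : 0 <= x by rewrite mulr_ge0 ?expR_ge0.
case/andP: (abs_ceil_itv x_ge0) => _ ceil_lt.
have two_le : (2 : R) <= (2 * k)%:R by rewrite natrM ler_peMr // ler1n.
by rewrite /kpar /maxn; case: ifP => _; lra.
Qed.

Lemma exp_gt_before_Tpar u : 0 < alpha -> (1 <= k)%N -> (2 * k <= d)%N ->
  (u < Tpar d k alpha)%N -> (2 * k)%:R < d%:R * expR (- (alpha * u%:R ^+ 2)).
Proof.
move=> alpha_gt0 k_ge1 kd uT.
have k_gt0 : (0 : R) < (2 * k)%:R by rewrite ltr0n; lia.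
have d_gt0 : (0 : R) < d%:R by rewrite ltr0n; lia.
set L := ln (d%:R / (2 * k)%:R : R).
have L_ge0 : 0 <= L by rewrite ln_ge0 // ler_pdivlMr // mul1r ler_nat.
set S := Num.sqrt (L / alpha).
have uS : u%:R < S.
  have S_ge0 : 0 <= S by exact: sqrtr_ge0.
  case/andP: (abs_ceil_itv S_ge0) => _; rewrite -/(Tpar d k alpha).
  by move: uT; rewrite -(ler_nat R) -natr1; lra.
have uL : alpha * u%:R ^+ 2 < L.
  rewrite mulrC -ltr_pdivlMr // -(sqr_sqrtr (divr_ge0 L_ge0 (ltW alpha_gt0))).
  by rewrite ltr_pXn2r ?nnegrE.
rewrite expRN ltr_pdivlMr ?expR_gt0 // mulrC -ltr_pdivlMr //.
by rewrite -[X in _ < X]lnK ?posrE ?divr_gt0 // ltr_expR.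
Qed.

End Schedule.

Lemma kpar_powR_le (R : realType) (d k : nat) (alpha p : R) (u : nat) :
  0 <= p -> 0 < alpha -> (1 <= k)%N -> (2 * k <= d)%N -> (u < Tpar d k alpha)%N ->
  (kpar d k alpha u)%:R `^ p
    <= 2 `^ p * d%:R `^ p * expR (- (alpha * u%:R ^+ 2) * p).
Proof.
move=> p_ge0 alpha_gt0 k_ge1 kd uT.
rewrite expRM -!powRM ?mulr_ge0 ?expR_ge0 //.
apply: ge0_ler_powR; rewrite ?nnegrE ?mulr_ge0 ?expR_ge0 //.
by rewrite -mulrA; apply/kpar_le_exp/exp_gt_before_Tpar.
Qed.

Lemma sqrt_SigmaBar_kpar_le (R : realType) (d : nat) (s : nat -> R) (k : nat)
    (alpha q : R) (t : nat) :
  (forall i j, (1 <= i)%N -> (i <= j)%N -> (j <= d)%N -> s j <= s i) ->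
  0 < s d -> (1 <= k)%N -> (2 * k <= d)%N -> 0 < q -> q < 2 ->
  Num.sqrt (SigmaBar d s (kpar d k alpha t) / s d ^+ 2)
    <= 2 `^ q^-1 * expR (alpha * t%:R ^+ 2 / q) * kappaBar d s k q.
Proof.
move=> s_nonincr sd_gt0 k_ge1 kd q_gt0 q_lt2.
have kK : (2 * k <= kpar d k alpha t)%N by exact: leq_maxr.
apply: le_trans (sqrt_SigmaBar_le s_nonincr sd_gt0 k_ge1 kK kd q_gt0 q_lt2) _.
apply: ler_wpM2r; first exact: powR_ge0.
rewrite mulrAC expRM -powRM ?expR_ge0 //.
have K_gt0 : (0 : R) < (kpar d k alpha t)%:R by rewrite ltr0n; lia.
apply: ge0_ler_powR;
  rewrite ?nnegrE ?invr_ge0 ?mulr_ge0 ?expR_ge0 ?divr_ge0 ?(ltW q_gt0) ?(ltW K_gt0) //.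
rewrite -mulrA ler_pM2l // ler_pdivrMl // -ler_pdivrMr ?expR_gt0 // -expRN.
exact: kpar_ge_exp.
Qed.

Lemma quadratic_exponent_le (R : realType) (p eta u : R) : 0 < p -> 0 < eta ->
  - (u ^+ 2) * p + (u + 1) ^+ 2 / (p^-1 + eta) + (u + 1)
    <= p * ((1 + (2 * p)^-1) ^+ 2 - 1) + (1 + (2 * p)^-1) ^+ 2 / eta.
Proof.
move=> p_gt0 eta_gt0.
have peta_gt0 : 0 < 1 + p * eta by rewrite addr_gt0 ?mulr_gt0.
have -> : (p^-1 + eta) = (1 + p * eta) / p by field; rewrite gt_eqF.
rewrite -subr_ge0.
set b := p ^+ 2 * eta / (1 + p * eta).
set u0 := (2 * p + 1) * (1 + p * eta) / (2 * p ^+ 2 * eta).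
have -> : p * ((1 + (2 * p)^-1) ^+ 2 - 1) + (1 + (2 * p)^-1) ^+ 2 / eta
    - (- (u ^+ 2) * p + (u + 1) ^+ 2 / ((1 + p * eta) / p) + (u + 1))
    = b * (u + 1 - u0) ^+ 2.
  by rewrite /b /u0; field; rewrite !gt_eqF.
by rewrite mulr_ge0 ?sqr_ge0 // divr_ge0 ?mulr_ge0 ?sqr_ge0 ?ltW.
Qed.

Lemma kpar_SigmaBar_product_le (R : realType) (d : nat) (s : nat -> R) (k : nat)
    (alpha p q : R) (u : nat) :
  (forall i j, (1 <= i)%N -> (i <= j)%N -> (j <= d)%N -> s j <= s i) ->
  0 < s d -> (1 <= k)%N -> (2 * k <= d)%N -> 0 < alpha -> 0 <= p ->
  0 < q -> q < 2 -> (u < Tpar d k alpha)%N ->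
  (kpar d k alpha u)%:R `^ p
      * Num.sqrt (SigmaBar d s (kpar d k alpha u.+1) / s d ^+ 2)
      * expR (alpha * u.+1%:R)
    <= 2 `^ (p + q^-1) * (d%:R `^ p * kappaBar d s k q
      * expR (alpha * (- (u%:R ^+ 2) * p + (u%:R + 1) ^+ 2 / q + (u%:R + 1)))).
Proof.
move=> s_nonincr sd_gt0 k_ge1 kd alpha_gt0 p_ge0 q_gt0 q_lt2 uT.
have kpar_le := kpar_powR_le p_ge0 alpha_gt0 k_ge1 kd uT.
have sqrt_le := sqrt_SigmaBar_kpar_le alpha u.+1 s_nonincr sd_gt0 k_ge1 kd q_gt0 q_lt2.
have u1_eq : u.+1%:R = u%:R + 1 :> R by rewrite natr1.
rewrite u1_eq in sqrt_le *.
apply: le_trans (ler_wpM2r (expR_ge0 _)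
  (ler_pM (powR_ge0 _ _) (sqrtr_ge0 _) kpar_le sqrt_le)) _.
have -> : alpha * (- (u%:R ^+ 2) * p + (u%:R + 1) ^+ 2 / q + (u%:R + 1))
    = - (alpha * u%:R ^+ 2) * p + alpha * (u%:R + 1) ^+ 2 / q + alpha * (u%:R + 1).
  by ring.
rewrite powRD ?pnatr_eq0 ?implybT // !expRD.
by rewrite le_eqVlt; apply/predU1P; left; ring.
Qed.

Theorem lemma4p12 (R : realType) :
  exists C : R, 0 < C /\
  forall (n d : nat) (A : 'M[R]_(n, d)) (s : nat -> R) (k : nat)
         (alpha p eta : R) (t : nat),
    (d <= n)%N ->
    is_singular_values A s ->
    \rank A = d ->
    0 < s d ->
    (1 <= k)%N -> (k <= d)%N -> (2 * k <= d)%N ->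
    1 <= alpha ->
    1 <= p -> p <= 100 ->
    0 < eta -> eta < 1 ->
    (1 <= t)%N -> (t <= Tpar d k alpha)%N ->
    let cp := 1 + (2 * p)^-1 in
    (kpar d k alpha t.-1)%:R `^ p
      * Num.sqrt (SigmaBar d s (kpar d k alpha t) / s d ^+ 2)
      * expR (alpha * t%:R)
    <= C * (d%:R `^ p * kappaBar d s k (p^-1 + eta)
            * expR (alpha * (p * (cp ^+ 2 - 1) + cp ^+ 2 / eta))).
Proof.
exists (2 `^ 200); split; first exact: powR_gt0.
move=> n d A s k alpha p eta [//|u] _ [s_nonincr _] _ sd_gt0 k_ge1 _ kd alpha_ge1
  p_ge1 p_le100 eta_gt0 eta_lt1 _ uT /=.
set q := p^-1 + eta.
have alpha_gt0 : 0 < alpha by lra.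
have p_gt0 : 0 < p by lra.
have invp_le1 : p^-1 <= 1 by rewrite invr_le1 // unitfE gt_eqF.
have q_gt0 : 0 < q by rewrite addr_gt0 ?invr_gt0.
have q_lt2 : q < 2 by rewrite /q; lra.
have invq_le_p : q^-1 <= p by rewrite -[p]invrK lef_pV2 ?posrE ?invr_gt0 // lerDl ltW.
apply: le_trans (kpar_SigmaBar_product_le s_nonincr sd_gt0 k_ge1 kd alpha_gt0
  (ltW p_gt0) q_gt0 q_lt2 uT) _.
have kappa_ge0 : 0 <= kappaBar d s k q := powR_ge0 _ _.
apply: ler_pM; rewrite ?powR_ge0 ?mulr_ge0 ?expR_ge0 //.
  by apply: ler_powR; rewrite ?ler1n //; lra.
rewrite ler_wpM2l ?mulr_ge0 ?powR_ge0 // ler_expR ler_wpM2l ?(ltW alpha_gt0) //.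
exact: quadratic_exponent_le.
Qed.
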